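(* Let $V=\{0,\tfrac12,1\}$ and consider any sentential language with an atomic expressive semantics whose consequence relation is induced by the truth-relation $ss\cap tt$. Then no binary connective of the language (with any truth function) is a G-conditional.
   Context: $ss\cap tt=\models_{\{1\},\{1\}}\cap\models_{\{1,\frac12\},\{1,\frac12\}}$, where $\gamma\models_{\mathcal{D}_p,\mathcal{D}_c}\delta$ iff ($\gamma\subseteq\mathcal{D}_p\Rightarrow\delta\cap\mathcal{D}_c\neq\emptyset$). A semantics: set of valuations mapping atoms to $V$, interpreting each connective by a truth function fixed across valuations, extended compositionally, such that every assignment of values to finitely many distinct atoms is realized. Atomic expressive: for every $\gamma\subseteq V$ there are a set of formulas $\Gamma$ and a valuation $v$ with $v(\Gamma)=\gamma$. Consequence: $\Gamma\vdash\Delta$ iff $v(\Gamma)\models v(\Delta)$ for all $v$; $\Gamma,A$ denotes $\Gamma\cup\{A\}$. A G-conditional $\to$ satisfies for all $\Gamma,\Delta,A,B$: $\Gamma\vdash A\to B,\Delta$ iff $\Gamma,A\vdash B,\Delta$; and $\Gamma,A\to B\vdash\Delta$ iff ($\Gamma\vdash A,\Delta$ and $\Gamma,B\vdash\Delta$). *)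

From mathcomp Require Import all_boot.
Set Implicit Arguments. Unset Strict Implicit. Unset Printing Implicit Defensive.

Inductive V := V0 | Vhalf | V1.

Section Lang.
Variables (C : Type) (ar : C -> nat).

Local Unset Implicit Arguments.
Inductive form : Type :=
  | Atom : nat -> form
  | App : forall c : C, ('I_(ar c) -> form) -> form.
Local Set Implicit Arguments.

Definition interp := forall c : C, ('I_(ar c) -> V) -> V.

Fixpoint eval (f : interp) (v : nat -> V) (A : form) : V :=
  match A with
  | Atom a => v a
  | App c args => f c (fun i => eval f v (args i))
  end.

Definition app2 (c : C) (A B : form) : form :=
  App c (fun i : 'I_(ar c) => if nat_of_ord i == 0 then A else B).

Definition semantics (S : (nat -> V) -> Prop) : Prop :=
  forall (s : seq nat) (h : nat -> V),
    exists v, S v /\ forall a, a \in s -> v a = h a.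

Definition img (f : interp) (v : nat -> V) (G : form -> Prop) : V -> Prop :=
  fun x => exists A, G A /\ eval f v A = x.

Definition atomic_expressive (f : interp) (S : (nat -> V) -> Prop) : Prop :=
  forall g : V -> Prop, exists (G : form -> Prop) (v : nat -> V),
    S v /\ forall x, img f v G x <-> g x.

Definition models_D (Dp Dc : V -> Prop) (g d : V -> Prop) : Prop :=
  (forall x, g x -> Dp x) -> exists y, d y /\ Dc y.

Definition D1 (x : V) : Prop := x = V1.
Definition D1half (x : V) : Prop := x = V1 \/ x = Vhalf.

(* ss ∩ tt = |=_{{1},{1}} ∩ |=_{{1,1/2},{1,1/2}} *)
Definition sstt (g d : V -> Prop) : Prop :=
  models_D D1 D1 g d /\ models_D D1half D1half g d.

Definition conseq (f : interp) (S : (nat -> V) -> Prop)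
  (G D : form -> Prop) : Prop :=
  forall v, S v -> sstt (img f v G) (img f v D).

Definition addf (A : form) (G : form -> Prop) : form -> Prop :=
  fun B => B = A \/ G B.

Definition G_conditional (f : interp) (S : (nat -> V) -> Prop) (c : C) : Prop :=
  forall (G D : form -> Prop) (A B : form),
    (conseq f S G (addf (app2 c A B) D) <-> conseq f S (addf A G) (addf B D)) /\
    (conseq f S (addf (app2 c A B) G) D <->
       (conseq f S G (addf A D) /\ conseq f S (addf B G) D)).

End Lang.
Arguments App {C ar} c _.

From mathcomp Require Import all_boot.

Set Implicit Arguments.
Unset Strict Implicit.

(* Take a valuation with v(p) = 1/2 and v(q) = 0.  The sequent |- p -> q, p
   holds for every G-conditional, and its ss-component forces v(p -> q) = 1;
   the tt-component of modus ponens p -> q, (p -> q) -> q |- q then forces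
   v((p -> q) -> q) = 0.  But |- (p -> q) -> q, p -> q holds as well, so by the
   right rule p |- q, (p -> q) -> q, whose tt-component v refutes: the premise
   p is designated (1/2) while both conclusions are 0. *)

Section GConditional.
Variables (C : Type) (ar : C -> nat) (f : interp ar) (S : (nat -> V) -> Prop).
Implicit Types (G D : form C ar -> Prop) (A B : form C ar) (v : nat -> V).

Lemma conseq_id G D A : G A -> D A -> conseq f S G D.
Proof.
move=> GA DA v _; split=> Gdes; exists (eval f v A); split;
  by [exists A | apply: Gdes; exists A].
Qed.

Lemma conseq_weakenr G D D' :
  (forall A, D A -> D' A) -> conseq f S G D -> conseq f S G D'.
Proof.
move=> DD' GD v Sv; have [ss tt] := GD v Sv.
split=> /[dup] Gdes => [/ss | /tt] [y [[A [DA <-]] Dy]];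
  by exists (eval f v A); split => //; exists A; split => //; apply: DD'.
Qed.

Lemma conseq_ss G D v : conseq f S G D -> S v ->
  (forall A, G A -> eval f v A = V1) -> exists2 A, D A & eval f v A = V1.
Proof.
move=> GD Sv Gdes; have [ss _] := GD v Sv.
have [|y [[A [DA <-]] Dy]] := ss; last by exists A.
by move=> x [A [GA <-]]; apply: Gdes.
Qed.

Lemma conseq_tt G D v : conseq f S G D -> S v ->
  (forall A, G A -> D1half (eval f v A)) ->
  exists2 A, D A & D1half (eval f v A).
Proof.
move=> GD Sv Gdes; have [_ tt] := GD v Sv.
have [|y [[A [DA <-]] Dy]] := tt; last by exists A.
by move=> x [A [GA <-]]; apply: Gdes.
Qed.

Variables (c : C) (cond : G_conditional f S c).

Lemma cond_or_antecedent A B :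
  conseq f S (fun _ => False) (addf (app2 c A B) (eq A)).
Proof. by apply/(proj1 (cond _ _ A B)); apply: (@conseq_id _ _ A); [left|right]. Qed.

Lemma cond_modus_ponens A B : conseq f S (addf (app2 c A B) (eq A)) (eq B).
Proof.
apply/(proj2 (cond _ _ A B)); split.
- by apply: (@conseq_id _ _ A); [|left].
- by apply: (@conseq_id _ _ B); [left|].
Qed.

Lemma cond_antecedent_entails_or_cond_cond A B :
  conseq f S (addf A (fun _ => False)) (addf B (eq (app2 c (app2 c A B) B))).
Proof.
apply/(proj1 (cond _ _ A B)).
by apply: conseq_weakenr (cond_or_antecedent (app2 c A B) B) => E [->|<-];
  [right|left].
Qed.

Section HalfFalse.
Variables (v : nat -> V) (A B : form C ar).
Hypotheses (Sv : S v) (vA : eval f v A = Vhalf) (vB : eval f v B = V0).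

Lemma eval_cond_half_false : eval f v (app2 c A B) = V1.
Proof.
have [E [->|<-] //] := conseq_ss (cond_or_antecedent A B) Sv (fun _ => False_ind _).
by rewrite vA.
Qed.

Lemma eval_cond_cond_half_false : eval f v (app2 c (app2 c A B) B) = V0.
Proof.
have mp := conseq_tt (cond_modus_ponens (app2 c A B) B) Sv.
case vE: (eval f v _) => //; exfalso; have [|E <-] := mp;
  try by rewrite vB => -[].
all: by move=> E [->|<-]; rewrite /D1half ?vE ?eval_cond_half_false; auto.
Qed.

Lemma half_false_valuation_absurd : False.
Proof.
have [|E [->|<-]] := conseq_tt (cond_antecedent_entails_or_cond_cond A B) Sv.
  by move=> E [->|[]]; right.
all: by rewrite ?vB ?eval_cond_cond_half_false => -[].
Qed.

End HalfFalse.
End GConditional.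

Theorem theorem4p4 (C : Type) (ar : C -> nat) (f : interp ar)
  (S : (nat -> V) -> Prop) :
  semantics S -> atomic_expressive f S ->
  forall c : C, ar c = 2 -> ~ G_conditional f S c.
Proof.
move=> semS _ c _ cond.
have [v [Sv vatoms]] := semS [:: 0; 1] (fun n => if n == 0 then Vhalf else V0).
apply: (half_false_valuation_absurd cond (A := Atom C ar 0) (B := Atom C ar 1) Sv).
all: by rewrite /= vatoms.
Qed.
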